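(* Let $(S,K,I)$ be a split graph. If $\Phi(S)$ is disconnected, then $S$ is decomposable.
   Context: All graphs are finite and simple. A split graph is a graph $S$ whose vertex set is a disjoint union $V(S)=K\,\dot\cup\,I$ with $K$ a clique and $I$ an independent set; $(K,I)$ is called a bipartition of $S$, and $(S,K,I)$ denotes $S$ together with this fixed bipartition. For a split graph $(S,K,I)$ and distinct $u,v\in I$, $\sigma_{uv}(S)$ is the number of induced subgraphs of $S$ isomorphic to $P_4$ containing both $u$ and $v$. The factor graph $\Phi(S)$ is the loopless multigraph with vertex set $I$ having exactly $\sigma_{uv}(S)$ parallel edges between $u$ and $v$. Graph notions (connected, complete, clique, etc.) applied to $\Phi(S)$ refer to its underlying simple graph, in which $u\sim v$ iff $\sigma_{uv}(S)\ge1$. Tyshkevich composition: for a split graph $(S,K,I)$ and a graph $G$ vertex-disjoint from $S$, $S\circ G$ is the graph with vertex set $V(S)\cup V(G)$ and edge set $E(S)\cup E(G)\cup\{xy: x\in K,\ y\in V(G)\}$. A graph $G$ is decomposable if $G=S\circ H$ for some split graph $S$ and graph $H$, each with at least one vertex; otherwise $G$ is indecomposable. *)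

From mathcomp Require Import all_boot all_order.
Set Implicit Arguments. Unset Strict Implicit. Unset Printing Implicit Defensive.

Definition simple_graph (T : finType) (adj : rel T) : Prop :=
  symmetric adj /\ irreflexive adj.

Definition is_clique (T : finType) (adj : rel T) (A : {set T}) : Prop :=
  forall x y, x \in A -> y \in A -> x != y -> adj x y.

Definition is_independent (T : finType) (adj : rel T) (A : {set T}) : Prop :=
  forall x y, x \in A -> y \in A -> ~~ adj x y.

Definition split_bipartition (T : finType) (adj : rel T) (K I : {set T}) : Prop :=
  [/\ K :|: I = [set: T], [disjoint K & I], is_clique adj K & is_independent adj I].

Definition induced_P4 (T : finType) (adj : rel T) (X : {set T}) : bool :=
  [exists a, exists b, exists c, exists d,
    [&& X == [set a; b; c; d], uniq [:: a; b; c; d],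
        adj a b, adj b c, adj c d,
        ~~ adj a c, ~~ adj b d & ~~ adj a d]].

Definition sigma (T : finType) (adj : rel T) (u v : T) : nat :=
  #|[set X : {set T} | [&& u \in X, v \in X & induced_P4 adj X]]|.

(* Underlying simple graph of the factor graph Phi(S): vertex set I,
   u ~ v iff u <> v and sigma_uv(S) >= 1. *)
Definition factor_adj (T : finType) (adj : rel T) (I : {set T}) : rel T :=
  fun u v => [&& u \in I, v \in I, u != v & 0 < sigma adj u v].

Definition factor_disconnected (T : finType) (adj : rel T) (I : {set T}) : Prop :=
  exists u v, [/\ u \in I, v \in I & ~~ connect (factor_adj adj I) u v].

(* G (on T) is decomposable: G = S' o H with S' split (bipartition K', I'),
   H a graph, both with at least one vertex, i.e. the vertex set partitions
   into K', I', B with K' u I' and B nonempty, K' a clique, I' independent,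
   every vertex of K' adjacent to every vertex of B, and no vertex of I'
   adjacent to any vertex of B. *)
Definition decomposable (T : finType) (adj : rel T) : Prop :=
  exists (K' I' B : {set T}),
    [/\ K' :|: I' :|: B = [set: T], [disjoint K' & I'] & [disjoint K' :|: I' & B]] /\
    [/\ K' :|: I' != set0, B != set0, is_clique adj K' & is_independent adj I'] /\
    (forall x y, x \in K' -> y \in B -> adj x y) /\
    (forall x y, x \in I' -> y \in B -> ~~ adj x y).

(* Compare the vertices of I by their neighbourhoods, which lie in K.  If x and
   y are incomparable, witnessed by k1 in N(x) \ N(y) and k2 in N(y) \ N(x),
   then x k1 k2 y is an induced P4, so x and y are adjacent in Phi(S).  Hence,
   for u and v in different components of Phi(S), the component C of u in the incomparability graph misses v, and every vertex
   of I outside C is comparable with all of C; following incomparability steps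
   inside C shows it lies entirely below or entirely above C.  Cutting I just
   below or just above C, whichever separates u from v, yields a cut in which
   every neighbourhood on the lower side is contained in every neighbourhood on
   the upper side, and such a cut is a Tyshkevich decomposition. *)

From mathcomp Require Import all_boot all_order.

Set Implicit Arguments.
Unset Strict Implicit.
Unset Printing Implicit Defensive.

Lemma connect_ind (T : finType) (e : rel T) (P : pred T) x :
  P x -> (forall y z, connect e x y -> P y -> e y z -> P z) ->
  forall y, connect e x y -> P y.
Proof.
move=> Px step y /connectP[p xp ->].
elim/last_ind: p xp => [|p z IHp] //=.
rewrite rcons_path last_rcons => /andP[xp pz].
apply: step pz; last exact: IHp.
by apply/connectP; exists p.
Qed.

Section SplitGraph.

Variables (T : finType) (adj : rel T) (K I : {set T}).
Hypotheses (adj_sym : symmetric adj) (splitKI : split_bipartition adj K I).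

Definition nbhd x : {set T} := [set k | adj x k].

Lemma clique_or_indep x : (x \in K) || (x \in I).
Proof. by case: splitKI => covKI _ _ _; rewrite -in_setU covKI inE. Qed.

Lemma notin_clique x : x \in I -> x \notin K.
Proof. by case: splitKI => _ disKI _ _ xI; rewrite (disjointFl disKI xI). Qed.

Lemma neq_clique_indep x y : x \in K -> y \in I -> x != y.
Proof. by move=> xK yI; apply: contraTneq xK => ->; apply: notin_clique. Qed.

Lemma adj_indep_clique x k : x \in I -> adj x k -> k \in K.
Proof.
case: splitKI => _ _ _ indI xI xk; case/orP: (clique_or_indep k) => // kI.
by move: (indI _ _ xI kI); rewrite xk.
Qed.

(* The lower part J and its neighbours in K form the split graph S' of S' o H. *)
Lemma decomposable_of_cut (J : {set T}) :
  J \subset I -> J != set0 -> I :\: J != set0 ->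
  (forall y z, y \in J -> z \in I :\: J -> nbhd y \subset nbhd z) ->
  decomposable adj.
Proof.
case: splitKI => _ disKI cliK indI subJI /set0Pn[y0 y0J] /set0Pn[z0 z0IJ] cut.
pose K' := [set k in K | [exists y in J, adj y k]].
have K'K : K' \subset K by apply/subsetP => k; rewrite inE => /andP[].
have inK' y k : y \in J -> adj y k -> k \in K'.
  move=> yJ yk; rewrite inE (adj_indep_clique (subsetP subJI _ yJ) yk).
  by apply/existsP; exists y; rewrite yJ.
exists K', J, (~: (K' :|: J)); split; [split | split; [split | split]].
- by rewrite setUCr.
- exact: disjointW K'K subJI disKI.
- by rewrite disjoints_subset setCK.
- by apply/set0Pn; exists y0; rewrite inE y0J orbT.
- apply/set0Pn; exists z0; move: z0IJ; rewrite !inE => /andP[/negbTE-> z0I].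
  by rewrite orbF (negbTE (notin_clique z0I)).
- by move=> x y /(subsetP K'K) xK /(subsetP K'K); apply: cliK.
- by move=> x y /(subsetP subJI) xI /(subsetP subJI); apply: indI.
- move=> k z kK'; rewrite in_setC in_setU negb_or => /andP[zK' zJ].
  case/orP: (clique_or_indep z) => [zK | zI].
    by apply: (cliK _ _ (subsetP K'K _ kK') zK); apply: contraNneq zK' => <-.
  move: kK'; rewrite inE => /andP[_ /existsP[y /andP[yJ yk]]].
  have: k \in nbhd y by rewrite inE.
  move/(subsetP (cut y z yJ _)); rewrite !inE zJ zI adj_sym; exact.
- move=> y z yJ; rewrite in_setC in_setU negb_or => /andP[zK' zJ].
  case/orP: (clique_or_indep z) => [zK | zI].
    by apply: contraNN zK' => yz; apply: inK' yz.
  exact: indI (subsetP subJI _ yJ) zI.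
Qed.

Lemma induced_P4_split x k1 k2 y :
  x \in I -> y \in I -> k1 \in K -> k2 \in K ->
  adj x k1 -> ~~ adj x k2 -> adj y k2 -> ~~ adj y k1 ->
  induced_P4 adj [set x; k1; k2; y].
Proof.
case: splitKI => _ _ cliK indI xI yI k1K k2K xk1 nxk2 yk2 nyk1.
have k12 : k1 != k2 by apply: contraNneq nxk2 => <-.
have xy : x != y by apply: contraNneq nyk1 => <-.
apply/existsP; exists x; apply/existsP; exists k1.
apply/existsP; exists k2; apply/existsP; exists y.
rewrite eqxx /= !inE !negb_or xy k12 (eq_sym x k1) (eq_sym x k2).
rewrite !neq_clique_indep // xk1 (cliK _ _ k1K k2K k12) nxk2 (indI _ _ xI yI).
by rewrite (adj_sym k2) yk2 (adj_sym k1) nyk1.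
Qed.

Definition incomparable x y :=
  [&& x \in I, y \in I, ~~ (nbhd x \subset nbhd y) & ~~ (nbhd y \subset nbhd x)].

Lemma incomparable_factor_adj x y : incomparable x y -> factor_adj adj I x y.
Proof.
case/and4P=> xI yI /subsetPn[k1 xk1 nyk1] /subsetPn[k2 yk2 nxk2].
rewrite !inE in xk1 nyk1 yk2 nxk2.
have xy : x != y by apply: contraNneq nyk1 => <-.
rewrite /factor_adj xI yI xy /sigma card_gt0; apply/set0Pn.
exists [set x; k1; k2; y]; rewrite !inE !eqxx !orbT /=.
apply: induced_P4_split => //.
  exact: adj_indep_clique xI xk1.
exact: adj_indep_clique yI yk2.
Qed.

Section Component.

Variable u : T.
Hypothesis uI : u \in I.

Local Notation component := (connect incomparable u).

Lemma component_indep x : component x -> x \in I.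
Proof. by apply: connect_ind => // y z _ _ /and4P[]. Qed.

Lemma comparable_outside x z : component x -> z \in I -> ~~ component z ->
  (nbhd x \subset nbhd z) || (nbhd z \subset nbhd x).
Proof.
move=> cx zI; apply: contraNT; rewrite negb_or => /andP[nxz nzx].
apply: (connect_trans cx) (connect1 _).
by rewrite /incomparable nxz nzx zI (component_indep cx).
Qed.

Definition below_component z :=
  [forall x, component x ==> (nbhd z \subset nbhd x)].

Lemma above_component z x : z \in I -> ~~ component z -> ~~ below_component z ->
  component x -> nbhd x \subset nbhd z.
Proof.
move=> zI ncz nbz; have [uz|zu] := orP (comparable_outside (connect0 _ u) zI ncz).
  move: x; apply: (@connect_ind _ _ (fun y => nbhd y \subset nbhd z)) => //.
  move=> y w cy yz yw.
  have cw : component w := connect_trans cy (connect1 yw).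
  case/orP: (comparable_outside cw zI ncz) => // zw.
  by case/and4P: yw => _ _ /negP[]; apply: subset_trans zw.
case/negP: nbz; apply/forallP=> y; apply/implyP; move: y.
apply: (@connect_ind _ _ (fun y => nbhd z \subset nbhd y)) => // y w cy zy yw.
have cw : component w := connect_trans cy (connect1 yw).
case/orP: (comparable_outside cw zI ncz) => // wz.
by case/and4P: yw => _ _ _ /negP[]; apply: subset_trans zy.
Qed.

Lemma nbhd_sub_above y z : z \in I -> ~~ component z -> ~~ below_component z ->
  component y || below_component y -> nbhd y \subset nbhd z.
Proof.
move=> zI ncz nbz /orP[cy | /forallP/(_ u)/implyP/(_ (connect0 _ u)) yu].
  exact: above_component.
exact: subset_trans yu (above_component zI ncz nbz (connect0 _ u)).
Qed.

Lemma decomposable_of_component v : v \in I -> ~~ component v -> decomposable adj.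
Proof.
move=> vI ncv; have cu : component u := connect0 _ u.
have [bv | nbv] := boolP (below_component v).
  apply: (@decomposable_of_cut
           [set y in I | ~~ component y && below_component y]).
  - by apply/subsetP => y; rewrite inE => /andP[].
  - by apply/set0Pn; exists v; rewrite !inE vI ncv.
  - by apply/set0Pn; exists u; rewrite !inE uI cu.
  move=> y z; rewrite !inE => /and3P[_ _ yb] /andP[+ zI].
  have [cz _ | ncz] := boolP (component z).
    by move/forallP/(_ z)/implyP: yb; apply.
  by rewrite zI => nbz; apply: nbhd_sub_above; rewrite ?yb ?orbT.
apply: (@decomposable_of_cut [set y in I | component y || below_component y]).
- by apply/subsetP => y; rewrite inE => /andP[].
- by apply/set0Pn; exists u; rewrite !inE uI cu.
- by apply/set0Pn; exists v; rewrite !inE vI (negbTE ncv) (negbTE nbv).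
move=> y z; rewrite !inE => /andP[_ yJ] /andP[+ zI].
by rewrite zI negb_or => /andP[ncz nbz]; apply: nbhd_sub_above.
Qed.

End Component.

End SplitGraph.

Theorem corollary2p5 (T : finType) (adj : rel T) (K I : {set T}) :
  simple_graph adj ->
  split_bipartition adj K I ->
  factor_disconnected adj I ->
  decomposable adj.
Proof.
move=> [adj_sym _] splitKI [u [v [uI vI ncuv]]].
apply: (decomposable_of_component adj_sym splitKI uI vI).
apply: contra ncuv; apply: connect_sub => x y xy.
exact/connect1/(incomparable_factor_adj adj_sym splitKI xy).
Qed.
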